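(* Let $n$ be a positive integer and let $a,b$ be distinct integers with $0<a,b<n$, so that $G=C_{2n}(a,b,n)$ is a $5$-regular circulant graph. Suppose there exists a generator $g$ of the cyclic group $(\mathbb{Z}_{2n},+)$ such that, writing $a=p\cdot g$ and $b=q\cdot g$ with $p,q\in\{0,1,\dots,2n-1\}$ (i.e. $pg\equiv a$ and $qg\equiv b \pmod{2n}$), the number $r=\min\{p,q,2n-p,2n-q\}$ satisfies $r\geq \lceil \tfrac{2n}{3}\rceil$. Then $G$ is word-representable.
   Context: Two distinct letters $x,y$ alternate in a word $w$ if, after deleting all other letters from $w$, the resulting word is of the form $xyxy\cdots$ or $yxyx\cdots$ (of even or odd length). A graph $G=(V,E)$ is word-representable if there is a word $w$ over the alphabet $V$, containing every letter of $V$ at least once, such that for all distinct $x,y\in V$, $xy\in E$ if and only if $x$ and $y$ alternate in $w$. For an integer $m$ and a set $R$ of positive integers each at most $m/2$, the circulant graph $C_m(R)$ has vertex set $\{0,1,\dots,m-1\}$, with $i$ and $j$ adjacent iff $\min(|i-j|,\,m-|i-j|)\in R$. $C_{2n}(a,b,n)$ denotes the circulant graph on $2n$ vertices with jump set $\{a,b,n\}$. For an integer $k$ and $g\in\mathbb{Z}_{2n}$, $k\cdot g$ denotes the $k$-fold sum of $g$ in $\mathbb{Z}_{2n}$. *)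

From mathcomp Require Import all_boot.
Set Implicit Arguments. Unset Strict Implicit. Unset Printing Implicit Defensive.

Definition alternate (V : eqType) (x y : V) (w : seq V) : Prop :=
  let s := [seq z <- w | (z == x) || (z == y)] in
  s = [seq (if odd i then y else x) | i <- iota 0 (size s)] \/
  s = [seq (if odd i then x else y) | i <- iota 0 (size s)].

Definition word_representable (V : finType) (E : rel V) : Prop :=
  exists w : seq V, (forall v : V, v \in w) /\
    (forall x y : V, x != y -> (E x y <-> alternate x y w)).

Definition circ_dist (m i j : nat) : nat :=
  let d := if i <= j then j - i else i - j in minn d (m - d).

Definition circulant (m : nat) (R : seq nat) : rel 'I_m :=
  fun i j => circ_dist m i j \in R.

From mathcomp Require Import all_boot zify.
Set Implicit Arguments. Unset Strict Implicit. Unset Printing Implicit Defensive.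

(* Let m = 2n and let h be the inverse of g modulo m. Multiplication by h sends
   the jumps a, b, n to p, q and n (n because h is odd), all of which lie between
   m/3 and 2m/3 modulo m. So coloring a vertex v by the third of [0, m) that
   contains v h mod m is a proper 3-coloring of C_m(a, b, n).
   Every 3-colorable graph is word-representable: list the vertices by color
   in a permutation P and, for every non-edge xy with x before y in P, append a
   block in which each edge st (s before t in P) reads s t s t while x and y fail
   to alternate. *)

Section Alternation.
Variable T : eqType.

Lemma sorted_neq_alternating (x y : T) i k : x != y ->
  sorted (fun u v => u != v) [seq (if odd j then y else x) | j <- iota i k].
Proof.
move=> xy; elim: k i => [|k IHk] i //=.
case: k IHk => [|k] IHk //=; have := IHk i.+1; rewrite /= => ->.
by rewrite andbT; case: (odd i); rewrite // eq_sym.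
Qed.

Lemma alternate_sorted_neq (x y : T) (w : seq T) : x != y -> alternate x y w ->
  sorted (fun u v => u != v) [seq z <- w | (z == x) || (z == y)].
Proof.
move=> xy [->|->]; first exact: sorted_neq_alternating.
by apply: sorted_neq_alternating; rewrite eq_sym.
Qed.

Lemma flatten_nseq_pair (x y : T) k :
  flatten (nseq k [:: x; y]) = [seq (if odd j then y else x) | j <- iota 0 k.*2].
Proof.
elim: k => [|k IHk] //=.
rewrite IHk /= -(addn0 2) iotaDl -map_comp.
by congr [:: _, _ & _]; apply: eq_map => j /=; rewrite negbK.
Qed.

Lemma alternate_of_filter_pairs (x y : T) (w : seq T) k :
  [seq z <- w | (z == x) || (z == y)] = flatten (nseq k [:: x; y]) -> alternate x y w.
Proof. by rewrite /alternate => ->; left; rewrite flatten_nseq_pair size_map size_iota. Qed.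

Lemma alternateC (x y : T) (w : seq T) : alternate x y w -> alternate y x w.
Proof.
rewrite /alternate (@eq_filter _ _ (fun z => (z == y) || (z == x))) => [|z]; last exact: orbC.
by case=> ?; [right|left].
Qed.

End Alternation.

Definition sort_enum_by (V : finType) (K : V -> nat) : seq V :=
  sort (fun u v => K u <= K v) (enum V).

Lemma mem_sort_enum_by (V : finType) (K : V -> nat) v : v \in sort_enum_by K.
Proof. by rewrite mem_sort mem_enum. Qed.

Lemma filter_sort_enum_by (V : finType) (K : V -> nat) s t : K s < K t ->
  [seq z <- sort_enum_by K | (z == s) || (z == t)] = [:: s; t].
Proof.
move=> Kst; have st : s != t by apply: contraTneq Kst => ->; rewrite ltnn.
set l := [seq z <- _ | _].
have l_sorted : sorted (fun u v => K u <= K v) l.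
  apply: sorted_filter; first by move=> ???; apply: leq_trans.
  by apply: sort_sorted => ??; apply: leq_total.
have l_perm : perm_eq l [:: s; t].
  apply: uniq_perm; first by rewrite filter_uniq // sort_uniq enum_uniq.
    by rewrite /= mem_seq1 st.
  by move=> z; rewrite mem_filter mem_sort_enum_by andbT !inE.
have := perm_size l_perm; case: l l_sorted l_perm => [|u [|v [|? ?]]] //= uv l_perm _.
move: uv (perm_uniq l_perm); have := perm_mem l_perm u; have := perm_mem l_perm v.
rewrite /= !inE !eqxx orbT /=.
move=> /esym/orP[]/eqP-> /esym/orP[]/eqP->; rewrite /= ?inE ?eqxx //= ?andbT.
all: by [rewrite st | rewrite leqNgt Kst].
Qed.

Lemma filter_comm (T : Type) (a b : pred T) (s : seq T) :
  [seq z <- [seq z <- s | b z] | a z] = [seq z <- [seq z <- s | a z] | b z].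
Proof. by rewrite -!filter_predI; apply: eq_filter => z /=; rewrite andbC. Qed.

Section ThreeColorable.
Variables (V : finType) (E : rel V) (col : V -> nat).
Hypothesis E_sym : symmetric E.
Hypothesis col_lt3 : forall v, col v < 3.
Hypothesis col_proper : forall u v, E u v -> col u != col v.

Local Notation N := #|V|.

Definition col_key (v : V) : nat := col v * N + enum_rank v.

Lemma enum_rank_lt (v : V) : enum_rank v < N.
Proof. exact: ltn_ord. Qed.

Lemma col_key_lt_col u v : col u < col v -> col_key u < col_key v.
Proof.
move=> lt_uv; have := enum_rank_lt u; rewrite /col_key.
have : (col u).+1 * N <= col v * N by rewrite leq_mul2r lt_uv orbT.
rewrite mulSn; lia.
Qed.

Lemma col_key_lt v : col_key v < 3 * N.
Proof.
have : col v * N <= 2 * N by rewrite leq_mul2r -ltnS col_lt3 orbT.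
have := enum_rank_lt v; rewrite /col_key; lia.
Qed.

Lemma col_key_col_le u v : col_key u < col_key v -> col u <= col v.
Proof. by apply: contraTT; rewrite -!ltnNge => /col_key_lt_col /ltnW. Qed.

Lemma col_key_inj : injective col_key.
Proof.
move=> u v eq_uv; case: (ltngtP (col u) (col v)) => [|| eq_col].
- by move/col_key_lt_col; rewrite eq_uv ltnn.
- by move/col_key_lt_col; rewrite eq_uv ltnn.
by move: eq_uv; rewrite /col_key eq_col => /addnI/val_inj/enum_rank_inj.
Qed.

Lemma edge_col_lt s t : E s t -> col_key s < col_key t -> col s < col t.
Proof. by move=> /col_proper neq_st /col_key_col_le; rewrite leq_eqVlt (negbTE neq_st). Qed.

(* Edges into y come from smaller colors and, when col y <= col x + 1, edges
   out of x go to colors >= col y, so all edges keep their direction. *)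
Definition swap_key (x y v : V) : nat :=
  if v == y then 3 * N else if v == x then (3 * N).+1
  else if col v < col y then col_key v else (3 * N).+2 + col_key v.

(* When col x = 0 and col y = 2 a path x - z - y may force x before y in every
   permutation; instead x and y are doubled, which edges do not notice since x is
   then a source and y a sink. *)
Definition nonedge_block (x y : V) : seq V :=
  if col y <= (col x).+1 then sort_enum_by col_key ++ sort_enum_by (swap_key x y)
  else [seq z <- sort_enum_by col_key | z != y] ++ [:: x; y] ++
       [seq z <- sort_enum_by col_key | z != x].

Definition nonedges : seq (V * V) :=
  [seq p <- enum {: V * V} | ~~ E p.1 p.2 && (col_key p.1 < col_key p.2)].

Definition color_word : seq V :=
  sort_enum_by col_key ++ flatten [seq nonedge_block p.1 p.2 | p <- nonedges].

Lemma swap_key_edge x y s t : ~~ E x y -> col_key x < col_key y -> col y <= (col x).+1 ->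
  E s t -> col_key s < col_key t -> swap_key x y s < swap_key x y t.
Proof.
move=> Nxy lt_xy col_y Est lt_st.
have col_st := edge_col_lt Est lt_st; have col_xy := col_key_col_le lt_xy.
have := col_key_lt s; have := col_key_lt t.
have not_yx : ~~ ((s == y) && (t == x)).
  by apply: contra Nxy => /andP[/eqP<- /eqP<-]; rewrite E_sym.
have not_xy : ~~ ((s == x) && (t == y)) by apply: contra Nxy => /andP[/eqP<- /eqP<-].
move: not_yx not_xy; rewrite /swap_key.
case: (eqVneq s y) => [?|_]; case: (eqVneq s x) => [?|_];
  case: (eqVneq t y) => [?|_]; case: (eqVneq t x) => [?|_] //=; subst;
  move=> *; repeat case: ifP => ?; lia.
Qed.

Lemma nonedge_block_edge x y s t : ~~ E x y -> col_key x < col_key y ->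
  E s t -> col_key s < col_key t ->
  [seq z <- nonedge_block x y | (z == s) || (z == t)] = [:: s; t; s; t].
Proof.
move=> Nxy lt_xy Est lt_st; have col_st := edge_col_lt Est lt_st.
rewrite /nonedge_block; case: ifP => [col_y|/negbT]; rewrite !filter_cat.
  by rewrite !filter_sort_enum_by // swap_key_edge.
rewrite -ltnNge => col_y.
have col_x0 : col x = 0 by have := col_lt3 y; lia.
have col_y2 : col y = 2 by have := col_lt3 y; lia.
have neq_sy : (s == y) = false.
  by apply/negbTE; apply: contraTneq col_st => ->; have := col_lt3 t; lia.
have neq_tx : (t == x) = false by apply/negbTE; apply: contraTneq col_st => ->; lia.
have filter_drop u : [seq z <- [seq z <- sort_enum_by col_key | z != u] | (z == s) || (z == t)]
    = [seq z <- [:: s; t] | z != u] by rewrite filter_comm filter_sort_enum_by.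
rewrite (filter_drop y) (filter_drop x) /= neq_sy neq_tx !(eq_sym x) !(eq_sym y) neq_sy neq_tx /=.
case: (eqVneq s x) => [eq_sx|_]; case: (eqVneq t y) => [eq_ty|_]; rewrite ?eq_sx ?eq_ty //.
by move: Nxy; rewrite -eq_sx -eq_ty Est.
Qed.

Lemma nonedge_block_nonedge x y : ~~ E x y -> col_key x < col_key y ->
  ~~ sorted (fun u v => u != v) [seq z <- nonedge_block x y | (z == x) || (z == y)].
Proof.
move=> Nxy lt_xy; have neq_xy : (x == y) = false.
  by apply: contraTF lt_xy => /eqP->; rewrite ltnn.
have neq_yx : (y == x) = false by rewrite eq_sym.
rewrite /nonedge_block; case: ifP => _; rewrite !filter_cat.
  have -> : [seq z <- sort_enum_by (swap_key x y) | (z == x) || (z == y)] = [:: y; x].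
    rewrite -(@filter_sort_enum_by _ (swap_key x y)) /swap_key ?eqxx ?neq_xy //.
    by apply: eq_filter => z; rewrite orbC.
  by rewrite filter_sort_enum_by //= !eqxx andbF.
rewrite filter_comm filter_sort_enum_by // [in X in _ ++ X]filter_comm filter_sort_enum_by //=.
by rewrite !eqxx neq_xy neq_yx /= !eqxx.
Qed.

Lemma color_word_alternate x y : col_key x < col_key y -> (E x y <-> alternate x y color_word).
Proof.
move=> lt_xy; have neq_xy : x != y by apply: contraTneq lt_xy => ->; rewrite ltnn.
split=> [Exy | alt_xy].
  apply: (@alternate_of_filter_pairs _ _ _ _ (size nonedges).*2.+1).
  rewrite /color_word filter_cat filter_sort_enum_by // filter_flatten -map_comp.
  rewrite (proj1 (@eq_in_map _ _ _ (fun=> [:: x; y; x; y]) nonedges)); last first.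
    by move=> [u v]; rewrite mem_filter => /andP[/andP[Nuv lt_uv] _]; apply: nonedge_block_edge.
  by elim: nonedges => //= p ps ->.
apply/negPn/negP => Nxy.
have xy_nonedge : (x, y) \in nonedges by rewrite mem_filter /= Nxy lt_xy mem_enum.
move: (alternate_sorted_neq neq_xy alt_xy); rewrite /color_word.
case/splitPr: xy_nonedge => ps1 ps2; rewrite map_cat flatten_cat /= !filter_cat.
move/cat_sorted2 => [_ /cat_sorted2 [_ /cat_sorted2 [sorted_block _]]].
by move: sorted_block; apply/negP/nonedge_block_nonedge.
Qed.

Theorem three_colorable_word_representable : word_representable E.
Proof.
exists color_word; split=> [v|x y neq_xy]; first by rewrite mem_cat mem_sort_enum_by.
case: (ltngtP (col_key x) (col_key y)) => [lt_xy|lt_yx|/col_key_inj eq_xy].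
- exact: color_word_alternate.
- rewrite E_sym (color_word_alternate lt_yx).
  by split; apply: alternateC.
- by rewrite eq_xy eqxx in neq_xy.
Qed.

End ThreeColorable.

Lemma circ_distC m i j : circ_dist m i j = circ_dist m j i.
Proof. by rewrite /circ_dist; case: (ltngtP i j) => // ->. Qed.

Lemma circ_dist_shift m u v : u < m -> v < m ->
  v = u + circ_dist m u v %[mod m] \/ u = v + circ_dist m u v %[mod m].
Proof.
move=> lt_um lt_vm; rewrite /circ_dist; case: leqP => [le_uv|lt_vu].
  case: leqP => _; first by left; congr (_ %% _); lia.
  by right; rewrite -modnDr; congr (_ %% _); lia.
case: leqP => _; first by right; congr (_ %% _); lia.
by left; rewrite -modnDr; congr (_ %% _); lia.
Qed.

Lemma third_shift_neq m X e : X < m -> e < m -> m <= 3 * e <= 2 * m ->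
  3 * X %/ m != 3 * ((X + e) %% m) %/ m.
Proof.
move=> lt_Xm lt_em /andP[le_me le_em]; have m_gt0 : 0 < m by lia.
set Y := (X + e) %% m.
have Y_eq : Y = X + e \/ Y + m = X + e.
  rewrite /Y; case: (ltnP (X + e) m) => [lt|ge]; first by left; rewrite modn_small.
  by right; rewrite -{1}(subnK ge) modnDr modn_small; lia.
apply/eqP => eq_thirds.
have := divn_eq (3 * X) m; have := ltn_pmod (3 * X) m_gt0.
have := divn_eq (3 * Y) m; have := ltn_pmod (3 * Y) m_gt0.
rewrite eq_thirds; set q := _ * m; lia.
Qed.

Lemma modn_shiftMr m h u v d : v = u + d %[mod m] ->
  v * h %% m = (u * h %% m + d * h %% m) %% m.
Proof. by move=> shift; rewrite modnDm -mulnDl -modnMml shift modnMml. Qed.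

Lemma circulant_word_representable m (R : seq nat) h :
  {in R, forall d, m <= 3 * (d * h %% m) <= 2 * m} -> word_representable (@circulant m R).
Proof.
move=> R_far; pose col (v : 'I_m) := 3 * (v * h %% m) %/ m.
have m_gt0 (v : 'I_m) : 0 < m by apply: leq_ltn_trans (ltn_ord v).
apply: (@three_colorable_word_representable _ _ col) => [u v|v|u v].
- by rewrite /circulant circ_distC.
- by rewrite /col ltn_divLR ?ltn_pmul2l ?ltn_pmod ?(m_gt0 v).
rewrite /circulant => /R_far far_d; have lt_m k := ltn_pmod k (m_gt0 u).
rewrite /col; case: (circ_dist_shift (ltn_ord u) (ltn_ord v)) => /modn_shiftMr->.
  exact: third_shift_neq.
by rewrite eq_sym; apply: third_shift_neq.
Qed.

Lemma coprime_modinv g m : 1 < m -> coprime g m -> exists h, g * h = 1 %[mod m].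
Proof.
move=> m_gt1 co_gm; have g_gt0 : 0 < g.
  by case: g co_gm => // /eqP; rewrite gcd0n => m1; rewrite m1 in m_gt1.
case: (egcdnP m g_gt0) => h k def_hg _.
by exists h; rewrite mulnC def_hg (eqP co_gm) modnMDl.
Qed.

Lemma modinv_cancel m g h p a : g * h = 1 %[mod m] -> p * g = a %[mod m] -> a * h = p %[mod m].
Proof. by move=> gh pg; rewrite -modnMml -pg modnMml -mulnA -modnMmr gh modnMmr muln1. Qed.

Lemma odd_modinv g h m : 1 < m -> ~~ odd m -> g * h = 1 %[mod m] -> odd h.
Proof.
move=> m_gt1 /negbTE m_even gh.
by have := odd_mod (g * h) m_even; rewrite gh modn_small // oddM => /esym/andP[].
Qed.

Lemma mul_odd_mod_double n h : odd h -> n * h = n %[mod 2 * n].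
Proof.
move=> h_odd; have -> : n * h = h./2 * (2 * n) + n.
  by rewrite -{1}(odd_double_half h) h_odd -muln2; nia.
by rewrite modnMDl.
Qed.

Theorem theorem19 (n a b : nat) :
  0 < n -> 0 < a < n -> 0 < b < n -> a != b ->
  (exists g p q : nat,
      [/\ g < 2 * n, coprime g (2 * n), p < 2 * n, q < 2 * n &
      [/\ p * g = a %[mod 2 * n], q * g = b %[mod 2 * n] &
          (2 * n + 2) %/ 3 <= minn (minn p q) (minn (2 * n - p) (2 * n - q))]]) ->
  word_representable (@circulant (2 * n) [:: a; b; n]).
Proof.
move=> n_gt0 _ _ _ [g [p [q [_ co_g lt_p lt_q [pg qg]]]]].
set r := (2 * n + 2) %/ 3; rewrite !leq_min => /andP[/andP[r_p r_q] /andP[r_p' r_q']].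
have le_m3r : 2 * n <= 3 * r.
  by have := divn_eq (2 * n + 2) 3; have := ltn_pmod (2 * n + 2) (isT : 0 < 3); lia.
have m_gt1 : 1 < 2 * n by lia.
have [h gh] := coprime_modinv m_gt1 co_g.
have h_odd : odd h by apply: (odd_modinv m_gt1 _ gh); rewrite oddM.
apply: (@circulant_word_representable _ _ h) => d.
rewrite !inE => /or3P[]/eqP->.
- by rewrite (modinv_cancel gh pg) modn_small //; lia.
- by rewrite (modinv_cancel gh qg) modn_small //; lia.
- by rewrite mul_odd_mod_double // modn_small; lia.
Qed.
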